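(* Let $\mathcal{X}=\bigsqcup_{j=1}^m\mathcal{X}_j$ be a finite partitioned set, $T$ a block-invariant row-stochastic matrix on $\mathcal{X}$, $p_0\in\mathcal{P}(\mathcal{X})$, and $p_{n+1}=p_nT$ for $n=0,\dots,N-1$. Set $q_n:=p_nT$, $D_n:=D_{\mathrm{KL}}(p_n\|q_n)$, $\Delta V_n:=V(p_n)-V(p_{n+1})$, and $\mathcal{S}_n:=D_n+\Delta V_n$, where $V$ is the KL potential relative to $p_0$, and assume $V(p_0)<\infty$. Then $\mathcal{S}_n\ge 0$ for every $n=0,1,\dots,N-1$, and consequently $$\mathcal{S}^{[0:N)}:=\sum_{n=0}^{N-1}\mathcal{S}_n=\sum_{n=0}^{N-1}D_n+V(p_0)-V(p_N)\ \ge 0.$$ Moreover $\mathcal{S}_n=0$ if and only if $D_n=0$ and $\Delta V_n=0$.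
   Context: $\mathcal{P}(\mathcal{X})$ is the set of probability distributions (row vectors) on $\mathcal{X}$. Block invariance: $\sum_{y\in\mathcal{X}_j}T(x,y)=1$ for all $x\in\mathcal{X}_j$, all $j$. $T_j$ is the restriction of $T$ to block $\mathcal{X}_j$, $\mathcal{I}_j=\{\pi\in\mathcal{P}(\mathcal{X}_j):\pi T_j=\pi\}$, $w_j(p)=\sum_{x\in\mathcal{X}_j}p(x)$, $\Pi(p_0)=\{\sum_j w_j(p_0)\pi_j:\pi_j\in\mathcal{I}_j\}$ (each $\pi_j$ extended by zero outside $\mathcal{X}_j$), and the KL potential is $V(p)=\inf_{\pi\in\Pi(p_0)}D_{\mathrm{KL}}(p\|\pi)$. $D_{\mathrm{KL}}(p\|q)=\sum_x p(x)\log\frac{p(x)}{q(x)}$ with $0\log(0/q)=0$, $p\log(p/0)=+\infty$ for $p>0$. *)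

From HB Require Import structures.
From mathcomp Require Import all_boot all_order all_algebra.
From mathcomp Require Import all_classical all_reals all_analysis.
Set Implicit Arguments. Unset Strict Implicit. Unset Printing Implicit Defensive.
Import Order.TTheory GRing.Theory Num.Theory.
Local Open Scope classical_set_scope.
Local Open Scope ring_scope.

Section KLDefs.
Variables (R : realType) (X : finType).

Definition is_distr (p : X -> R) : Prop :=
  (forall x, 0 <= p x) /\ \sum_(x : X) p x = 1.

Definition row_stochastic (T : X -> X -> R) : Prop :=
  (forall x y, 0 <= T x y) /\ (forall x, \sum_(y : X) T x y = 1).

(* the partition X = ⊔_{j < m} X_j is given by the block map blk : X -> 'I_m,
   X_j = [pred x | blk x == j] *)
Definition block_invariant (m : nat) (blk : X -> 'I_m) (T : X -> X -> R) : Prop :=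
  forall (j : 'I_m) x, blk x = j -> \sum_(y | blk y == j) T x y = 1.

Definition push (p : X -> R) (T : X -> X -> R) : X -> R :=
  fun y => \sum_(x : X) p x * T x y.

Definition kl_term (a b : R) : \bar R :=
  if a == 0 then 0%E else if b == 0 then +oo%E else (a * ln (a / b))%:E.

Definition KL (p q : X -> R) : \bar R := (\sum_(x : X) kl_term (p x) (q x))%E.

Definition wblk (m : nat) (blk : X -> 'I_m) (j : 'I_m) (p : X -> R) : R :=
  \sum_(x | blk x == j) p x.

(* pi ∈ I_j, extended by zero outside X_j: pi is a distribution on X_j
   with pi T_j = pi *)
Definition inv_blk (m : nat) (blk : X -> 'I_m) (T : X -> X -> R) (j : 'I_m)
    (pi : X -> R) : Prop :=
  (forall x, 0 <= pi x) /\ (forall x, blk x != j -> pi x = 0) /\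
  \sum_(x | blk x == j) pi x = 1 /\
  (forall y, blk y = j -> \sum_(x | blk x == j) pi x * T x y = pi y).

Definition PiSet (m : nat) (blk : X -> 'I_m) (T : X -> X -> R) (p0 : X -> R)
  : set (X -> R) :=
  [set pi | exists pis : 'I_m -> X -> R,
     (forall j, inv_blk blk T j (pis j)) /\
     pi = (fun x => \sum_(j < m) wblk blk j p0 * pis j x)].

Definition Vpot (m : nat) (blk : X -> 'I_m) (T : X -> X -> R) (p0 p : X -> R)
  : \bar R :=
  ereal_inf [set KL p pi | pi in PiSet blk T p0].

End KLDefs.

From HB Require Import structures.
From mathcomp Require Import all_boot all_order all_algebra.
From mathcomp Require Import all_classical all_reals all_analysis.
From mathcomp Require Import ring lra.
Set Implicit Arguments. Unset Strict Implicit. Unset Printing Implicit Defensive.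
Import Order.TTheory GRing.Theory Num.Theory.
Local Open Scope classical_set_scope.
Local Open Scope ring_scope.

(* The stochastic map T sends every element of Π(p0) to itself, so the data
   processing inequality D(pT || πT) <= D(p || π) gives V(p T) <= V(p): the
   potential is nonincreasing along the chain, and it is nonnegative by Gibbs'
   inequality since p_n and π have the same total mass.  As V(p0) is finite,
   every V(p_n) is finite, so each ΔV_n is a well-defined nonnegative real and
   the increments telescope.  Both D_n and ΔV_n are nonnegative, hence S_n
   vanishes exactly when both do. *)

Section KLTerm.
Variable R : realType.

(* Agrees with [kl_term] whenever [a = 0] or [b != 0]; for [a != 0 = b] it is
   a junk real, so lemmas about it assume [a != 0 -> b != 0]. *)
Definition kl_real (a b : R) : R := if a == 0 then 0 else a * ln (a / b).

(* ln t <= t - 1 at t = b r / a *)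
Lemma kl_real_ge_tangent (a b r : R) : 0 <= a -> 0 <= b -> 0 < r ->
  (a != 0 -> b != 0) -> a * ln r + a - b * r <= kl_real a b.
Proof.
move=> a0 b0 r0 ab; rewrite /kl_real; case: eqP => [->|/eqP an0].
  by rewrite !mul0r !add0r oppr_le0 mulr_ge0 // ltW.
have ap : 0 < a by rewrite lt_def an0.
have bp : 0 < b by rewrite lt_def ab.
set t := b * r / a.
have tp : 0 < t by rewrite divr_gt0 // mulr_gt0.
have -> : a / b = r / t by rewrite /t; field; rewrite ?gt_eqF.
have -> : b * r = a * t by rewrite /t; field; rewrite gt_eqF.
have ln_t : ln t <= t - 1.
  by have := @le_ln1Dx _ (t - 1); rewrite subrKC; apply; lra.
have : a * ln t <= a * (t - 1) by rewrite ler_pM2l.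
rewrite ln_div ?posrE // mulrBr mulrBr mulr1; lra.
Qed.

Lemma log_sum_ineq (I : finType) (a b : I -> R) :
  (forall i, 0 <= a i) -> (forall i, 0 <= b i) ->
  (forall i, a i != 0 -> b i != 0) ->
  kl_real (\sum_i a i) (\sum_i b i) <= \sum_i kl_real (a i) (b i).
Proof.
move=> a0 b0 ab.
case: (eqVneq (\sum_i a i) 0) => [A0|An0].
  rewrite /kl_real A0 eqxx big1 // => i _.
  by rewrite (psumr_eq0P (fun i _ => a0 i) A0 (i := i) isT) eqxx.
have Bn0 : \sum_i b i != 0.
  apply: contra An0 => /eqP B0; apply/eqP/big1 => i _.
  have bi0 := psumr_eq0P (fun i _ => b0 i) B0 (i := i) isT.
  by have [//|/ab] := eqVneq (a i) 0; rewrite bi0 eqxx.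
set A := \sum_i a i in An0 *; set B := \sum_i b i in Bn0 *.
have Ap : 0 < A by rewrite lt_def An0 sumr_ge0.
have Bp : 0 < B by rewrite lt_def Bn0 sumr_ge0.
have rp : 0 < A / B by apply: divr_gt0.
apply: le_trans (ler_sum _ (fun i _ => kl_real_ge_tangent (a0 i) (b0 i) rp (@ab i))).
rewrite sumrB big_split /= -!mulr_suml -/A -/B /kl_real (negbTE An0).
have -> : B * (A / B) = A by field; rewrite gt_eqF.
lra.
Qed.

Lemma kl_realMr (a b c : R) : 0 <= c -> kl_real (a * c) (b * c) = c * kl_real a b.
Proof.
move=> c0; rewrite /kl_real; have [->|cn0] := eqVneq c 0.
  by rewrite mulr0 eqxx mul0r.
rewrite mulf_eq0 (negbTE cn0) orbF; case: eqP => _; first by rewrite mulr0.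
have [->|bn0] := eqVneq b 0; first by rewrite mul0r !invr0 !mulr0; ring.
by rewrite invfM mulrACA divff // mulr1; ring.
Qed.

End KLTerm.

Section KLDivergence.
Variables (R : realType) (X : finType).
Implicit Types (p q : X -> R) (T : X -> X -> R).

Lemma KL_finite p q : (forall x, p x != 0 -> q x != 0) ->
  KL p q = (\sum_x kl_real (p x) (q x))%:E.
Proof.
move=> pq; rewrite /KL -sumEFin; apply: eq_bigr => x _.
by rewrite /kl_term /kl_real; case: eqP => // /eqP /pq /negbTE ->.
Qed.

Lemma KL_pinfty p q x0 : p x0 != 0 -> q x0 = 0 -> KL p q = +oo%E.
Proof.
move=> px0 qx0; rewrite /KL (bigD1 x0) //= /kl_term (negbTE px0) qx0 eqxx addye //.
apply: (big_ind (fun y => y != -oo%E)) => [//||i _].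
  by move=> u v u1 v1; rewrite adde_eq_ninfty negb_or u1 v1.
by case: ifP => // _; case: ifP.
Qed.

Lemma KL_finite_or_pinfty p q : KL p q = +oo%E \/
  (forall x, p x != 0 -> q x != 0) /\ KL p q = (\sum_x kl_real (p x) (q x))%:E.
Proof.
case: (boolP [forall x, (p x != 0) ==> (q x != 0)]) => [/forallP pq|].
  have pq' x : p x != 0 -> q x != 0 by apply/implyP.
  by right; split=> //; apply: KL_finite.
rewrite negb_forall => /existsP [x]; rewrite negb_imply negbK => /andP [px0 /eqP qx0].
by left; apply: KL_pinfty px0 qx0.
Qed.

Lemma KL_ge0 p q : (forall x, 0 <= p x) -> (forall x, 0 <= q x) ->
  \sum_x p x = \sum_x q x -> (0 <= KL p q)%E.
Proof.
move=> p0 q0 mass; case: (KL_finite_or_pinfty p q) => [->|[pq ->]]; first exact: leey.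
rewrite lee_fin; apply: le_trans (log_sum_ineq p0 q0 pq).
rewrite mass /kl_real; case: eqP => // /eqP s0.
by rewrite divff // ln1 mulr0.
Qed.

Lemma push_ge0 p T : row_stochastic T -> (forall x, 0 <= p x) ->
  forall y, 0 <= push p T y.
Proof. by move=> [T0 _] p0 y; apply: sumr_ge0 => x _; apply: mulr_ge0. Qed.

Lemma sum_push p T : row_stochastic T -> \sum_y push p T y = \sum_x p x.
Proof.
move=> [_ T1]; rewrite /push exchange_big /=.
by apply: eq_bigr => x _; rewrite -mulr_sumr T1 mulr1.
Qed.

Lemma trajectory_distr p0 (p : nat -> X -> R) T N :
  row_stochastic T -> (forall x, 0 <= p0 x) ->
  p 0%N = p0 -> (forall n, (n < N)%N -> p n.+1 = push (p n) T) ->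
  forall n, (n <= N)%N -> (forall x, 0 <= p n x) /\ \sum_x p n x = \sum_x p0 x.
Proof.
move=> Tstoch p0_ge0 p_0 p_S; elim=> [|n IH nN]; first by rewrite p_0.
have [pn0 pn_mass] := IH (ltnW nN).
by rewrite p_S // sum_push //; split=> //; apply: push_ge0.
Qed.

Lemma KL_push_le p q T : (forall x, 0 <= p x) -> (forall x, 0 <= q x) ->
  row_stochastic T -> (KL (push p T) (push q T) <= KL p q)%E.
Proof.
move=> p0 q0 [T0 T1].
case: (KL_finite_or_pinfty p q) => [->|[pq ->]]; first exact: leey.
have pqT y : push p T y != 0 -> push q T y != 0.
  apply: contraNN => /eqP qT0; apply/eqP/big1 => x _.
  have := psumr_eq0P (fun x _ => mulr_ge0 (q0 x) (T0 x y)) qT0 (i := x) isT.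
  move/eqP; rewrite mulf_eq0 => /orP [/eqP qx0|/eqP ->]; last by rewrite mulr0.
  have [->|/pq] := eqVneq (p x) 0; first by rewrite mul0r.
  by rewrite qx0 eqxx.
rewrite (KL_finite pqT) lee_fin.
apply: (@le_trans _ _ (\sum_y \sum_x kl_real (p x * T x y) (q x * T x y))).
  apply: ler_sum => y _; apply: log_sum_ineq => x; rewrite ?mulr_ge0 //.
  by rewrite !mulf_eq0 !negb_or => /andP [/pq -> ->].
rewrite exchange_big /=; apply: ler_sum => x _.
by under eq_bigr do rewrite kl_realMr //; rewrite -mulr_suml T1 mul1r.
Qed.

End KLDivergence.

Section KLPotential.
Variables (R : realType) (X : finType) (m : nat) (blk : X -> 'I_m).
Variables (T : X -> X -> R) (p0 : X -> R).
Hypotheses (Tstoch : row_stochastic T) (Tblk : block_invariant blk T).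
Hypothesis p0_ge0 : forall x, 0 <= p0 x.

Lemma block_invariant_offblock x y : blk y != blk x -> T x y = 0.
Proof.
move=> yx; have [T0 T1] := Tstoch.
have := T1 x; rewrite (bigID (fun y => blk y == blk x)) /= (Tblk erefl).
move=> /eqP; rewrite -subr_eq0 addrAC subrr add0r => /eqP Tout0.
exact: (psumr_eq0P (fun y _ => T0 x y) Tout0 yx).
Qed.

Lemma PiSet_push_eq pi : PiSet blk T p0 pi -> push pi T = pi.
Proof.
move=> [pis [pis_inv ->]]; apply: funext => y; rewrite /push.
under eq_bigr do rewrite mulr_suml; rewrite exchange_big /=.
apply: eq_bigr => j _; under eq_bigr do rewrite -mulrA; rewrite -mulr_sumr.
congr (_ * _); have [_ [pis_out [_ pis_fix]]] := pis_inv j.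
rewrite (bigID (fun x => blk x == j)) /= [X in _ + X]big1 ?addr0; last first.
  by move=> x /pis_out ->; rewrite mul0r.
have [/pis_fix //|yj] := eqVneq (blk y) j.
rewrite pis_out // big1 // => x /eqP xj.
by rewrite block_invariant_offblock ?mulr0 ?xj.
Qed.

Lemma PiSet_ge0 pi : PiSet blk T p0 pi -> forall x, 0 <= pi x.
Proof.
move=> [pis [pis_inv ->]] x; apply: sumr_ge0 => j _.
by rewrite mulr_ge0 ?sumr_ge0 //; case: (pis_inv j).
Qed.

Lemma PiSet_mass pi : PiSet blk T p0 pi -> \sum_x pi x = \sum_x p0 x.
Proof.
move=> [pis [pis_inv ->]]; rewrite exchange_big /=.
under eq_bigr do rewrite -mulr_sumr.
rewrite [RHS](partition_big blk predT) //=; apply: eq_bigr => j _.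
have [_ [pis_out [pis_sum _]]] := pis_inv j.
by rewrite (bigID (fun x => blk x == j)) /= [X in _ + X]big1 ?addr0 ?pis_sum ?mulr1.
Qed.

Lemma Vpot_ge0 q : (forall x, 0 <= q x) -> \sum_x q x = \sum_x p0 x ->
  (0 <= Vpot blk T p0 q)%E.
Proof.
move=> q0 mass; apply: le_ereal_inf_tmp => _ [pi Hpi <-].
by apply: KL_ge0 => //; [exact: PiSet_ge0 | rewrite mass PiSet_mass].
Qed.

Lemma Vpot_push_le q : (forall x, 0 <= q x) ->
  (Vpot blk T p0 (push q T) <= Vpot blk T p0 q)%E.
Proof.
move=> q0; apply: le_ereal_inf_tmp => _ [pi Hpi <-].
apply: ge_ereal_inf; exists (KL (push q T) pi); first by exists pi.
by rewrite -{1}(PiSet_push_eq Hpi); apply: KL_push_le => //; apply: PiSet_ge0.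
Qed.

End KLPotential.

Section Telescoping.
Variable R : realType.
Local Open Scope ereal_scope.

Lemma nonincreasing_ge0_fin_num (V : nat -> \bar R) N :
  (forall n, (n <= N)%N -> 0 <= V n) -> (forall n, (n < N)%N -> V n.+1 <= V n) ->
  V 0%N < +oo -> forall n, (n <= N)%N -> V n \is a fin_num.
Proof.
move=> V0 Vdecr V0fin n nN; rewrite ge0_fin_numE ?V0 //.
apply: le_lt_trans V0fin; elim: n nN => // n IH nN.
exact: le_trans (Vdecr n nN) (IH (ltnW nN)).
Qed.

Lemma telescope_sume (V : nat -> \bar R) N :
  (forall n, (n <= N)%N -> V n \is a fin_num) ->
  \sum_(n < N) (V n - V n.+1) = V 0%N - V N.
Proof.
move=> Vfin; rewrite -(big_mkord xpredT (fun n => V n - V n.+1)).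
rewrite (telescope_big (fun i j => V i - V j)) => [|k /andP [_ kN]].
  by case: N Vfin => [Vfin|//]; rewrite subee // Vfin.
by rewrite /= addeA subeK // Vfin // ltnW.
Qed.

End Telescoping.

Unset Implicit Arguments.
Theorem theorem2 (R : realType) (X : finType) (m : nat) (blk : X -> 'I_m)
    (T : X -> X -> R) (p0 : X -> R) (N : nat) (p : nat -> X -> R) :
  row_stochastic T -> block_invariant blk T -> is_distr p0 ->
  p 0%N = p0 -> (forall n, (n < N)%N -> p n.+1 = push (p n) T) ->
  (Vpot blk T p0 p0 < +oo)%E ->
  let D := fun n => KL (p n) (push (p n) T) in
  let dV := fun n => (Vpot blk T p0 (p n) - Vpot blk T p0 (p n.+1))%E in
  let S := fun n => (D n + dV n)%E in
  (forall n, (n < N)%N -> (0 <= S n)%E) /\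
  (\sum_(n < N) S n = \sum_(n < N) D n + Vpot blk T p0 p0 - Vpot blk T p0 (p N))%E /\
  (0 <= \sum_(n < N) S n)%E /\
  (forall n, (n < N)%N -> (S n = 0 <-> D n = 0 /\ dV n = 0)%E).
Proof.
move=> Tstoch Tblk [p0_ge0 _] p_0 p_S V0_fin D dV S.
have traj := trajectory_distr Tstoch p0_ge0 p_0 p_S.
pose V n := Vpot blk T p0 (p n).
have V_decr n : (n < N)%N -> (V n.+1 <= V n)%E.
  by move=> nN; rewrite /V p_S // Vpot_push_le //; case: (traj n (ltnW nN)).
have V_fin : forall n, (n <= N)%N -> V n \is a fin_num.
  apply: (nonincreasing_ge0_fin_num _ V_decr); last by rewrite /V p_0.
  by move=> n /traj [pn0 pn_mass]; apply: Vpot_ge0.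
have D_ge0 n : (n < N)%N -> (0 <= D n)%E.
  move=> nN; have [pn0 _] := traj n (ltnW nN).
  by apply: KL_ge0 => //; [apply: push_ge0 | rewrite sum_push].
have dV_ge0 n : (n < N)%N -> (0 <= dV n)%E.
  by move=> nN; rewrite /dV sube_ge0 ?(V_decr n) // (V_fin n.+1).
have S_ge0 n : (n < N)%N -> (0 <= S n)%E by move=> nN; rewrite adde_ge0 ?D_ge0 ?dV_ge0.
split=> //; split.
  by rewrite big_split /= (telescope_sume V_fin) addeA /V p_0.
split; first by apply: sume_ge0 => n _; apply: S_ge0.
move=> n nN; split; last by case=> D0 dV0; rewrite /S /= D0 dV0 adde0.
by move/eqP; rewrite padde_eq0 ?D_ge0 ?dV_ge0 // => /andP [/eqP -> /eqP ->].
Qed.
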